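(* Let $\omega\in\Omega$ have exactly one infinite $0$-cluster $\xi_0$ and exactly one infinite $1$-cluster $\xi_1$. Then the number of infinite contours of $\phi(\omega)$ that are incident to both $\xi_0$ and $\xi_1$ is exactly one.
   Context: Let $G$ be the square grid with vertex set $\mathbb{Z}^2$ and nearest-neighbour edges. The face of $G$ with lower-left corner $(m,n)$ is black if $m+n$ is even, white otherwise. $\Omega\subset\{0,1\}^{\mathbb{Z}^2}$ is the set of $\omega$ such that for every black face the states of its four vertices, listed clockwise from the lower-left corner, form one of $0000,1111,0011,1100,0110,1001$. A cluster of $\omega$ is a maximal $G$-connected set of vertices on which $\omega$ is constant ($0$- or $1$-cluster), infinite if it has infinitely many vertices. Let $\mathbb{L}_1$ have vertices $(m-\tfrac12,n+\tfrac12)$, $m,n$ both even, and $\mathbb{L}_2$ vertices $(m-\tfrac12,n+\tfrac12)$, $m,n$ both odd; in each, two vertices are joined by an edge (a closed segment of length $2$) iff at Euclidean distance $2$. The center of each black face $F$ is the midpoint of exactly one edge $e_1$ of $\mathbb{L}_1$ and one edge $e_2$ of $\mathbb{L}_2$. Define $\phi(\omega)\in\{0,1\}^{E(\mathbb{L}_1)\cup E(\mathbb{L}_2)}$: if the configuration around $F$ is $0000$ or $1111$ both get $0$; if the two upper vertices share a state different from the two lower ones, the horizontal one of $e_1,e_2$ gets $1$, the vertical $0$; if the two left vertices share a state different from the two right ones, the vertical one gets $1$, the horizontal $0$. Edges with value $1$ are present; a contour is a connected component of the set of present edges, infinite if it has infinitely many edges. A cluster is incident to a contour if some vertex of the cluster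 is at Euclidean distance $\tfrac12$ from some edge (segment) of the contour. *)

From Stdlib Require Import ZArith Reals Lra List Relations.
Open Scope Z_scope.

Definition vtx := (Z * Z)%type.
Definition config := vtx -> bool.

Definition G_adj (u v : vtx) : Prop :=
  Z.abs (fst u - fst v) + Z.abs (snd u - snd v) = 1.

(* face with lower-left corner (m,n) is black iff m+n even *)
Definition black (m n : Z) : Prop := Z.even (m + n) = true.

(* states listed clockwise from the lower-left corner:
   LL=(m,n), UL=(m,n+1), UR=(m+1,n+1), LR=(m+1,n) *)
Definition allowed (a b c d : bool) : Prop :=
  (a,b,c,d) = (false,false,false,false) \/ (a,b,c,d) = (true,true,true,true) \/
  (a,b,c,d) = (false,false,true,true)   \/ (a,b,c,d) = (true,true,false,false) \/
  (a,b,c,d) = (false,true,true,false)   \/ (a,b,c,d) = (true,false,false,true).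

Definition in_Omega (w : config) : Prop :=
  forall m n, black m n ->
    allowed (w (m,n)) (w (m,n+1)) (w (m+1,n+1)) (w (m+1,n)).

Definition finite_set {T : Type} (P : T -> Prop) : Prop :=
  exists l : list T, forall x, P x -> In x l.
Definition infinite_set {T : Type} (P : T -> Prop) : Prop := ~ finite_set P.

Definition same_set {T : Type} (P Q : T -> Prop) : Prop := forall x, P x <-> Q x.

Definition mono_step (w : config) (u v : vtx) : Prop := G_adj u v /\ w u = w v.
Definition same_cluster (w : config) : relation vtx := clos_refl_trans vtx (mono_step w).

(* a cluster = maximal connected monochromatic set = class of some vertex *)
Definition is_cluster (w : config) (C : vtx -> Prop) : Prop :=
  exists v, forall x, C x <-> same_cluster w v x.
Definition is_b_cluster (w : config) (b : bool) (C : vtx -> Prop) : Prop :=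
  exists v, w v = b /\ forall x, C x <-> same_cluster w v x.

Inductive lat := L1 | L2.
Inductive dir := Hor | Ver.

(* lattice vertex (l,a,b):
   L1 : (m - 1/2, n + 1/2) with m = 2a, n = 2b (both even)
   L2 : (m - 1/2, n + 1/2) with m = 2a+1, n = 2b+1 (both odd) *)
Definition lvtx := (lat * Z * Z)%type.
Definition lvtx_pos (p : lvtx) : R * R :=
  match p with
  | (L1, a, b) => (IZR (2*a) - /2, IZR (2*b) + /2)%R
  | (L2, a, b) => (IZR (2*a+1) - /2, IZR (2*b+1) + /2)%R
  end.

(* Two vertices of the same lattice are at distance 2 iff their indices differ by
   one unit step; an edge is encoded by its lower/left endpoint and direction. *)
Inductive edge := Edge (l : lat) (a b : Z) (d : dir).

Definition edge_ends (e : edge) : lvtx * lvtx :=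
  match e with
  | Edge l a b Hor => ((l,a,b), (l,a+1,b))
  | Edge l a b Ver => ((l,a,b), (l,a,b+1))
  end.

Definition edge_dir (e : edge) : dir := match e with Edge _ _ _ d => d end.

(* the black face F=(m,n) whose center (m+1/2,n+1/2) is the midpoint of e *)
Definition face_of (e : edge) : Z * Z :=
  match e with
  | Edge L1 a b Hor => (2*a, 2*b)
  | Edge L1 a b Ver => (2*a-1, 2*b+1)
  | Edge L2 a b Hor => (2*a+1, 2*b+1)
  | Edge L2 a b Ver => (2*a, 2*b+2)
  end.

Lemma face_of_black e : black (fst (face_of e)) (snd (face_of e)).
Proof.
  unfold black; destruct e as [[|] a b [|]]; cbn [face_of fst snd]; apply Z.even_spec;
  unfold Z.Even; first [ exists (a+b); ring | exists (a+b+1); ring ].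
Qed.

Lemma face_of_midpoint e :
  let '(p, q) := edge_ends e in
  let '(m, n) := face_of e in
  ((fst (lvtx_pos p) + fst (lvtx_pos q)) / 2 = IZR m + /2 /\
   (snd (lvtx_pos p) + snd (lvtx_pos q)) / 2 = IZR n + /2)%R.
Proof.
  destruct e as [[|] a b [|]]; cbn [edge_ends face_of lvtx_pos fst snd];
  repeat rewrite ?plus_IZR, ?minus_IZR, ?mult_IZR; split; lra.
Qed.

Definition phi (w : config) (e : edge) : bool :=
  let '(m, n) := face_of e in
  let ll := w (m,n) in let ul := w (m,n+1) in
  let ur := w (m+1,n+1) in let lr := w (m+1,n) in
  match edge_dir e with
  | Hor =>
      Bool.eqb ul ur && negb (Bool.eqb ll ul) && negb (Bool.eqb lr ul)
  | Ver =>
      Bool.eqb ll ul && negb (Bool.eqb lr ll) && negb (Bool.eqb ur ll)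
  end.

Definition present (w : config) (e : edge) : Prop := phi w e = true.

Definition share_end (e f : edge) : Prop :=
  let '(p, q) := edge_ends e in let '(p', q') := edge_ends f in
  p = p' \/ p = q' \/ q = p' \/ q = q'.

Definition contour_step (w : config) (e f : edge) : Prop :=
  present w e /\ present w f /\ share_end e f.

Definition is_contour (w : config) (K : edge -> Prop) : Prop :=
  exists e, present w e /\
    forall f, K f <-> (present w f /\ clos_refl_trans edge (contour_step w) e f).

Definition dist2 (P Q : R * R) : R :=
  ((fst P - fst Q) * (fst P - fst Q) + (snd P - snd Q) * (snd P - snd Q))%R.

Definition seg_point (A B : R * R) (t : R) : R * R :=
  (fst A + t * (fst B - fst A), snd A + t * (snd B - snd A))%R.

(* Euclidean distance from P to the closed segment [A,B] equals 1/2
   (the infimum of squared distances is attained and equals 1/4) *)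
Definition dist_seg_half (P A B : R * R) : Prop :=
  (exists t, 0 <= t <= 1 /\ dist2 P (seg_point A B t) = /4)%R /\
  (forall t, 0 <= t <= 1 -> /4 <= dist2 P (seg_point A B t))%R.

Definition vtx_pos (v : vtx) : R * R := (IZR (fst v), IZR (snd v)).

Definition incident (C : vtx -> Prop) (K : edge -> Prop) : Prop :=
  exists v e, C v /\ K e /\
    dist_seg_half (vtx_pos v) (lvtx_pos (fst (edge_ends e))) (lvtx_pos (snd (edge_ends e))).

(* A contour [K] is the jump set of a Boolean potential [s] on [Z^2]: around every unit
   square it crosses either none or exactly all of the state changes, and this square-by-square
   parity condition integrates.  Points near [K] are linked by steps changing either the state
   or [s], never both, so a contour incident to a 0-cluster and a 1-cluster puts them on
   opposite sides of [K].  A second contour incident to both would then have to cross the jump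
   set of [s], i.e. share an edge with [K]; and a finite contour cannot separate two infinite
   clusters.  For existence, follow a shortest chain of clusters from [xi0] to [xi1]: its
   intermediate clusters are finite, and the contour crossing the last link also crosses the
   whole outer boundary of each intermediate cluster, hence every earlier link. *)

From Stdlib Require Import ZArith Reals Lra Lia List Relations Classical ClassicalDescription Bool.
Open Scope Z_scope.

Lemma black_iff m n : black m n <-> exists k, m + n = 2*k.
Proof. unfold black. rewrite Z.even_spec. unfold Z.Even. split; intros [k H]; exists k; lia. Qed.

Lemma not_black_iff m n : ~ black m n <-> exists k, m + n = 2*k+1.
Proof.
  rewrite black_iff. split.
  - intros H. destruct (Z.Even_or_Odd (m+n)) as [[k Hk]|[k Hk]].
    + exfalso; apply H; exists k; lia.
    + exists k; lia.
  - intros [k Hk] [j Hj]. lia.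
Qed.

Ltac destruct_pairs := repeat match goal with
  | H : (_,_) = (_,_) |- _ => apply pair_equal_spec in H; destruct H
  | H : _ /\ _ |- _ => destruct H
  | H : exists _, _ |- _ => destruct H
  end.

Lemma G_adj_sym u v : G_adj u v -> G_adj v u.
Proof. unfold G_adj; lia. Qed.

Lemma G_adj_cases (x y x' y' : Z) : G_adj (x,y) (x',y') ->
  (x' = x+1 /\ y' = y) \/ (x' = x-1 /\ y' = y) \/ (x' = x /\ y' = y+1) \/ (x' = x /\ y' = y-1).
Proof. unfold G_adj; cbn [fst snd]; lia. Qed.

(** * Dual edges crossing grid steps *)

Definition corner (F : Z*Z) (u : vtx) : Prop :=
  u = F \/ u = (fst F, snd F + 1) \/ u = (fst F + 1, snd F) \/ u = (fst F + 1, snd F + 1).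

Definition crosses (e : edge) (u v : vtx) : Prop :=
  let m := fst (face_of e) in let n := snd (face_of e) in
  match edge_dir e with
  | Hor => (u = (m,n) /\ v = (m,n+1)) \/ (v = (m,n) /\ u = (m,n+1)) \/
           (u = (m+1,n) /\ v = (m+1,n+1)) \/ (v = (m+1,n) /\ u = (m+1,n+1))
  | Ver => (u = (m,n) /\ v = (m+1,n)) \/ (v = (m,n) /\ u = (m+1,n)) \/
           (u = (m,n+1) /\ v = (m+1,n+1)) \/ (v = (m,n+1) /\ u = (m+1,n+1))
  end.

Lemma crosses_sym e u v : crosses e u v -> crosses e v u.
Proof. unfold crosses. destruct (edge_dir e); tauto. Qed.

Lemma crosses_corner e u v : crosses e u v -> corner (face_of e) u /\ corner (face_of e) v.
Proof.
  unfold crosses, corner. destruct (face_of e) as [m n]; cbn [fst snd].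
  destruct (edge_dir e); intros H; repeat destruct H as [H|H]; destruct H; subst; tauto.
Qed.

Lemma face_of_inj e e' : face_of e = face_of e' -> edge_dir e = edge_dir e' -> e = e'.
Proof.
  destruct e as [[|] a b [|]], e' as [[|] a' b' [|]]; cbn [face_of edge_dir]; intros H1 H2;
  try discriminate; destruct_pairs; first [ exfalso; lia | f_equal; lia ].
Qed.

Lemma black_face_edges m n : black m n ->
  (exists eh, face_of eh = (m,n) /\ edge_dir eh = Hor) /\
  (exists ev, face_of ev = (m,n) /\ edge_dir ev = Ver).
Proof.
  rewrite black_iff; intros [k Hk].
  destruct (Z.Even_or_Odd m) as [[p Hp]|[p Hp]]; split.
  - exists (Edge L1 p (k - p) Hor); cbn [face_of edge_dir]; split; [f_equal; lia | auto].
  - exists (Edge L2 p (k - p - 1) Ver); cbn [face_of edge_dir]; split; [f_equal; lia | auto].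
  - exists (Edge L2 p (k - p - 1) Hor); cbn [face_of edge_dir]; split; [f_equal; lia | auto].
  - exists (Edge L1 (p+1) (k - p - 1) Ver); cbn [face_of edge_dir]; split; [f_equal; lia | auto].
Qed.

Lemma crosses_unique e e' u v : crosses e u v -> crosses e' u v -> e = e'.
Proof.
  destruct e as [[|] a b [|]], e' as [[|] a' b' [|]]; unfold crosses;
  cbn [face_of edge_dir fst snd]; intros H1 H2;
  repeat destruct H1 as [H1|H1]; repeat destruct H2 as [H2|H2];
  destruct_pairs; subst; destruct_pairs; first [ exfalso; lia | f_equal; lia ].
Qed.

(* The pair is a side of the black face [(x,y)] if that face is black, of [(x,y-1)] otherwise. *)
Lemma crosses_exists_right x y : exists e, crosses e (x,y) (x+1,y).
Proof.
  destruct (classic (black x y)) as [Hb|Hb].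
  - destruct (black_face_edges x y Hb) as [_ [ev [Hf Hd]]]. exists ev.
    unfold crosses. rewrite Hd, Hf. cbn [fst snd]. left; auto.
  - assert (Hb' : black x (y-1)).
    { apply not_black_iff in Hb. apply black_iff. destruct Hb as [k Hk]. exists k; lia. }
    destruct (black_face_edges x (y-1) Hb') as [_ [ev [Hf Hd]]]. exists ev.
    unfold crosses. rewrite Hd, Hf. cbn [fst snd].
    right; right; left. split; f_equal; lia.
Qed.

Lemma crosses_exists_up x y : exists e, crosses e (x,y) (x,y+1).
Proof.
  destruct (classic (black x y)) as [Hb|Hb].
  - destruct (black_face_edges x y Hb) as [[eh [Hf Hd]] _]. exists eh.
    unfold crosses. rewrite Hd, Hf. cbn [fst snd]. left; auto.
  - assert (Hb' : black (x-1) y).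
    { apply not_black_iff in Hb. apply black_iff. destruct Hb as [k Hk]. exists k; lia. }
    destruct (black_face_edges (x-1) y Hb') as [[eh [Hf Hd]] _]. exists eh.
    unfold crosses. rewrite Hd, Hf. cbn [fst snd].
    right; right; left. split; f_equal; lia.
Qed.

Lemma crosses_exists u v : G_adj u v -> exists e, crosses e u v.
Proof.
  destruct u as [x y], v as [x' y']. intros H.
  destruct (G_adj_cases _ _ _ _ H) as [[-> ->]|[[-> ->]|[[-> ->]|[-> ->]]]].
  - apply crosses_exists_right.
  - destruct (crosses_exists_right (x-1) y) as [e He]. exists e. apply crosses_sym.
    replace (x-1+1) with x in He by lia. exact He.
  - apply crosses_exists_up.
  - destruct (crosses_exists_up x (y-1)) as [e He]. exists e. apply crosses_sym.
    replace (y-1+1) with y in He by lia. exact He.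
Qed.

Lemma present_iff w e u v : in_Omega w -> crosses e u v -> (present w e <-> w u <> w v).
Proof.
  intros Hom. unfold present, phi, crosses.
  pose proof (face_of_black e) as Hb.
  destruct (face_of e) as [m n]. cbn [fst snd] in *.
  specialize (Hom m n Hb). unfold allowed in Hom.
  destruct (edge_dir e); intros H; repeat destruct H as [H|H]; destruct H; subst;
  destruct (w (m,n)), (w (m,n+1)), (w (m+1,n+1)), (w (m+1,n));
  (destruct Hom as [H|[H|[H|[H|[H|H]]]]]; try discriminate); cbn;
  split; intro; congruence.
Qed.

Lemma face_edges_not_both_present w e e' : in_Omega w -> face_of e = face_of e' ->
  edge_dir e = Hor -> edge_dir e' = Ver -> present w e -> present w e' -> False.
Proof.
  intros Hom Hf Hd Hd'. unfold present, phi. rewrite <- Hf, Hd, Hd'.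
  pose proof (face_of_black e) as Hb.
  destruct (face_of e) as [m n]. cbn [fst snd] in *.
  specialize (Hom m n Hb). unfold allowed in Hom.
  destruct (w (m,n)), (w (m,n+1)), (w (m+1,n+1)), (w (m+1,n));
  (destruct Hom as [H|[H|[H|[H|[H|H]]]]]; try discriminate); cbn; congruence.
Qed.

Lemma crossing_edge_present w u v : in_Omega w -> G_adj u v -> w u <> w v ->
  exists e, present w e /\ crosses e u v.
Proof.
  intros Hom Ha Hd. destruct (crosses_exists u v Ha) as [e He]. exists e. split; auto.
  apply (present_iff w e u v Hom He). auto.
Qed.

(* The white face centred at the lattice vertex [c]. *)
Definition vertex_face (c : lvtx) : Z*Z :=
  match c with
  | (L1, a, b) => (2*a-1, 2*b)
  | (L2, a, b) => (2*a, 2*b+1)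
  end.

Definition side (Q : Z*Z) (u v : vtx) : Prop :=
  let x := fst Q in let y := snd Q in
  (u = (x,y) /\ v = (x+1,y)) \/ (v = (x,y) /\ u = (x+1,y)) \/
  (u = (x,y+1) /\ v = (x+1,y+1)) \/ (v = (x,y+1) /\ u = (x+1,y+1)) \/
  (u = (x,y) /\ v = (x,y+1)) \/ (v = (x,y) /\ u = (x,y+1)) \/
  (u = (x+1,y) /\ v = (x+1,y+1)) \/ (v = (x+1,y) /\ u = (x+1,y+1)).

Lemma side_adj Q u v : side Q u v -> G_adj u v.
Proof.
  destruct Q as [x y]. unfold side, G_adj; cbn [fst snd].
  intros Hs; repeat destruct Hs as [Hs|Hs]; destruct Hs; subst; cbn; lia.
Qed.

Definition endpoint (c : lvtx) (e : edge) : Prop := c = fst (edge_ends e) \/ c = snd (edge_ends e).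

Lemma vertex_face_inj c c' : vertex_face c = vertex_face c' -> c = c'.
Proof.
  destruct c as [[[|] a] b], c' as [[[|] a'] b']; cbn [vertex_face]; intros H; destruct_pairs;
  first [exfalso; lia | f_equal; [f_equal|]; lia].
Qed.

Lemma vertex_face_white c : ~ black (fst (vertex_face c)) (snd (vertex_face c)).
Proof.
  apply not_black_iff.
  destruct c as [[[|] a] b]; cbn [vertex_face fst snd]; [exists (a+b-1) | exists (a+b)]; lia.
Qed.

Lemma white_side_crossing x y e u v : ~ black x y -> crosses e u v -> side (x,y) u v ->
  exists c, endpoint c e /\ vertex_face c = (x,y).
Proof.
  intros Hw. apply not_black_iff in Hw. destruct Hw as [k Hk].
  destruct e as [[|] a b [|]]; unfold crosses, side, endpoint;
  cbn [face_of edge_dir fst snd edge_ends]; intros H1 H2;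
  repeat destruct H1 as [H1|H1]; destruct_pairs; subst;
  repeat destruct H2 as [H2|H2]; destruct_pairs;
  first [ exfalso; lia
        | eexists; split; [left; reflexivity | cbn [vertex_face]; f_equal; lia]
        | eexists; split; [right; reflexivity | cbn [vertex_face]; f_equal; lia] ].
Qed.

Lemma black_side_crossing x y e u v : black x y -> crosses e u v -> side (x,y) u v ->
  face_of e = (x,y).
Proof.
  intros Hb. apply black_iff in Hb. destruct Hb as [k Hk].
  destruct e as [[|] a b [|]]; unfold crosses, side;
  cbn [face_of edge_dir fst snd]; intros H1 H2;
  repeat destruct H1 as [H1|H1]; destruct_pairs; subst;
  repeat destruct H2 as [H2|H2]; destruct_pairs;
  first [ exfalso; lia | f_equal; lia ].
Qed.

Lemma endpoint_common_corner c e : endpoint c e ->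
  exists u, corner (face_of e) u /\ corner (vertex_face c) u.
Proof.
  unfold endpoint, corner.
  destruct e as [[|] a b [|]]; cbn [face_of edge_ends fst snd];
  intros [-> | ->]; cbn [vertex_face fst snd].
  - exists (2*a, 2*b); split; [left | right; right; left]; f_equal; lia.
  - exists (2*a+1, 2*b); split; [right; right; left | left]; f_equal; lia.
  - exists (2*a-1, 2*b+1); split; [left | right; left]; f_equal; lia.
  - exists (2*a-1, 2*b+2); split; [right; left | left]; f_equal; lia.
  - exists (2*a+1, 2*b+1); split; [left | right; right; left]; f_equal; lia.
  - exists (2*a+2, 2*b+1); split; [right; right; left | left]; f_equal; lia.
  - exists (2*a, 2*b+2); split; [left | right; left]; f_equal; lia.
  - exists (2*a, 2*b+3); split; [right; left | left]; f_equal; lia.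
Qed.

Lemma share_end_of_endpoint c e f : endpoint c e -> endpoint c f -> share_end e f.
Proof.
  unfold endpoint, share_end. destruct (edge_ends e) as [p q], (edge_ends f) as [p' q'].
  cbn [fst snd]. intuition congruence.
Qed.

Lemma share_end_common e f : share_end e f -> exists c, endpoint c e /\ endpoint c f.
Proof.
  unfold share_end, endpoint. destruct (edge_ends e) as [p q], (edge_ends f) as [p' q'].
  cbn [fst snd]. intros [H|[H|[H|H]]]; subst; eauto.
Qed.

Lemma share_end_sym e f : share_end e f -> share_end f e.
Proof. unfold share_end. destruct (edge_ends e), (edge_ends f). intuition. Qed.

Definition crossed_by (K : edge -> Prop) (u v : vtx) : Prop := exists e, K e /\ crosses e u v.

Lemma crossed_by_sym K u v : crossed_by K u v -> crossed_by K v u.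
Proof. intros [e [H1 H2]]; exists e; split; auto; apply crosses_sym; auto. Qed.

Lemma contour_present w K e : is_contour w K -> K e -> present w e.
Proof. intros [e0 [_ H]] He. apply H in He. tauto. Qed.

Lemma contour_extend w K e f : is_contour w K -> K e -> present w f -> share_end e f -> K f.
Proof.
  intros [e0 [He0 H]] He Pf Hs. apply H. apply H in He. destruct He as [Pe Hc].
  split; auto. eapply rt_trans; [exact Hc|]. apply rt_step. split; auto.
Qed.

Lemma crossed_by_contour_iff w K e u v : is_contour w K -> crosses e u v ->
  (crossed_by K u v <-> K e).
Proof.
  intros Kc Ce. split; [intros [e' [Ke' Ce']]; rewrite (crosses_unique e e' u v Ce Ce'); auto|].
  intros Ke; exists e; auto.
Qed.

Lemma crossed_by_diff w K u v : in_Omega w -> is_contour w K -> crossed_by K u v -> w u <> w v.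
Proof.
  intros Hom Kc [e [Ke Ce]]. apply (present_iff w e u v Hom Ce). eapply contour_present; eauto.
Qed.

(* Inside a black face at most one edge is present; inside a white face all present edges
   share the centre of the face.  Either way a contour meets every face in all or none of
   its colour changes. *)
Lemma black_square_dichotomy w K x y : in_Omega w -> is_contour w K -> black x y ->
  (forall u v, side (x,y) u v -> (crossed_by K u v <-> w u <> w v)) \/
  (forall u v, side (x,y) u v -> ~ crossed_by K u v).
Proof.
  intros Hom Kc Hb.
  destruct (black_face_edges x y Hb) as [[eh [Fh Dh]] [ev [Fv Dv]]].
  assert (Hside : forall u v, side (x,y) u v ->
            exists e0, (e0 = eh \/ e0 = ev) /\ crosses e0 u v).
  { intros u v Hs. destruct (crosses_exists u v (side_adj _ _ _ Hs)) as [e0 C0].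
    exists e0. split; auto. pose proof (black_side_crossing x y e0 u v Hb C0 Hs) as F0.
    destruct (edge_dir e0) eqn:D0; [left | right]; apply face_of_inj; congruence. }
  assert (Hiff : K eh \/ K ev -> forall e0, e0 = eh \/ e0 = ev -> (K e0 <-> present w e0)).
  { intros HK e0 E0. split; [eapply contour_present; eauto|]. intros P0.
    destruct E0 as [-> | ->], HK as [K1|K1]; auto; exfalso;
    apply (face_edges_not_both_present w eh ev Hom); try congruence; eapply contour_present; eauto. }
  destruct (classic (K eh \/ K ev)) as [HK|HK]; [left | right];
  intros u v Hs; destruct (Hside u v Hs) as [e0 [E0 C0]];
  rewrite (crossed_by_contour_iff w K e0 u v Kc C0).
  - rewrite <- (present_iff w e0 u v Hom C0). auto.
  - destruct E0; subst; tauto.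
Qed.

Lemma white_square_dichotomy w K x y : in_Omega w -> is_contour w K -> ~ black x y ->
  (forall u v, side (x,y) u v -> (crossed_by K u v <-> w u <> w v)) \/
  (forall u v, side (x,y) u v -> ~ crossed_by K u v).
Proof.
  intros Hom Kc Hw.
  destruct (classic (exists u0 v0, side (x,y) u0 v0 /\ crossed_by K u0 v0))
    as [[u0 [v0 [S0 [e0 [K0 C0]]]]]|Hn];
    [left | right; intros u v Hs Hc; apply Hn; eauto].
  intros u v Hs. split; [apply crossed_by_diff; auto|]. intros Hd.
  destruct (crossing_edge_present w u v Hom (side_adj _ _ _ Hs) Hd) as [e' [P' C']].
  destruct (white_side_crossing x y e' u v Hw C' Hs) as [c' [E' W']].
  destruct (white_side_crossing x y e0 u0 v0 Hw C0 S0) as [c0 [E0 W0]].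
  assert (c0 = c') as <- by (apply vertex_face_inj; congruence).
  exists e'. split; auto. eapply contour_extend; eauto. eapply share_end_of_endpoint; eauto.
Qed.

Lemma square_dichotomy w K x y : in_Omega w -> is_contour w K ->
  (forall u v, side (x,y) u v -> (crossed_by K u v <-> w u <> w v)) \/
  (forall u v, side (x,y) u v -> ~ crossed_by K u v).
Proof.
  intros Hom Kc. destruct (classic (black x y));
  [apply black_square_dichotomy | apply white_square_dichotomy]; auto.
Qed.

(** * Boolean potentials *)

Fixpoint xor_upto (F : Z -> bool) (n : nat) : bool :=
  match n with O => false | S n => xorb (xor_upto F n) (F (Z.of_nat n)) end.
Fixpoint xor_below (F : Z -> bool) (n : nat) : bool :=
  match n with O => false | S n => xorb (xor_below F n) (F (- Z.of_nat n - 1)) end.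

Definition xor_prefix (F : Z -> bool) (z : Z) : bool :=
  if Z.leb 0 z then xor_upto F (Z.to_nat z) else xor_below F (Z.to_nat (- z)).

Lemma xor_prefix0 F : xor_prefix F 0 = false.
Proof. reflexivity. Qed.

Lemma xor_prefix_succ F z : xor_prefix F (z+1) = xorb (xor_prefix F z) (F z).
Proof.
  unfold xor_prefix. destruct (Z.leb_spec 0 z) as [H|H].
  - destruct (Z.leb_spec 0 (z+1)) as [H'|H']; [|lia].
    replace (Z.to_nat (z+1)) with (S (Z.to_nat z)) by lia. cbn [xor_upto].
    rewrite Z2Nat.id by lia. reflexivity.
  - destruct (Z.leb_spec 0 (z+1)) as [H'|H'].
    + assert (z = -1) by lia. subst. simpl. destruct (F (-1)); reflexivity.
    + replace (Z.to_nat (- z)) with (S (Z.to_nat (- (z+1)))) by lia. cbn [xor_below].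
      rewrite Z2Nat.id by lia. replace (- (- (z + 1)) - 1) with z by lia.
      destruct (xor_below F (Z.to_nat (- (z + 1)))), (F z); reflexivity.
Qed.

(* [h x y] and [v x y] are the jumps across the horizontal and vertical unit steps from
   [(x,y)]; integrate along row [0], then along the column. *)
Lemma square_parity_potential (h v : Z -> Z -> bool)
  (Hsq : forall x y, xorb (xorb (h x y) (h x (y+1))) (xorb (v x y) (v (x+1) y)) = false) :
  exists s : Z -> Z -> bool,
    (forall x y, s (x+1) y = xorb (s x y) (h x y)) /\
    (forall x y, s x (y+1) = xorb (s x y) (v x y)).
Proof.
  set (s := fun x y => xorb (xor_prefix (fun i => h i 0) x) (xor_prefix (v x) y)).
  assert (HV : forall x y, s x (y+1) = xorb (s x y) (v x y)).
  { intros x y. unfold s. rewrite xor_prefix_succ.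
    destruct (xor_prefix (fun i => h i 0) x), (xor_prefix (v x) y), (v x y); reflexivity. }
  exists s. split; auto.
  intros x. apply Z.peano_ind.
  - unfold s. rewrite !xor_prefix0, xor_prefix_succ.
    destruct (xor_prefix (fun i : Z => h i 0) x), (h x 0); reflexivity.
  - intros y IH. rewrite <- Z.add_1_r, !HV, IH. specialize (Hsq x y).
    destruct (s x y), (h x y), (h x (y+1)), (v x y), (v (x+1) y); cbn in *; congruence.
  - intros y IH. rewrite <- Z.sub_1_r.
    specialize (Hsq x (y-1)). replace (y-1+1) with y in Hsq by lia.
    pose proof (HV (x+1) (y-1)) as A. pose proof (HV x (y-1)) as B.
    replace (y-1+1) with y in A, B by lia. rewrite IH, B in A.
    destruct (s x (y-1)), (s (x+1) (y-1)), (h x (y-1)), (h x y), (v x (y-1)), (v (x+1) (y-1));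
      cbn in *; congruence.
Qed.

Definition b_of (P : Prop) : bool := if excluded_middle_informative P then true else false.

Lemma b_of_spec (P : Prop) : b_of P = true <-> P.
Proof. unfold b_of. destruct (excluded_middle_informative P); split; auto; discriminate. Qed.

Lemma b_of_neq (P Q : Prop) : b_of P <> b_of Q <-> (P <-> ~ Q).
Proof.
  unfold b_of. destruct (excluded_middle_informative P), (excluded_middle_informative Q);
  split; intros; try tauto; congruence.
Qed.

Definition potential_of (P : vtx -> vtx -> Prop) (s : vtx -> bool) : Prop :=
  forall u v, G_adj u v -> (s u <> s v <-> P u v).

Definition square_compatible (P : vtx -> vtx -> Prop) (c : vtx -> bool) : Prop :=
  forall x y, (forall u v, side (x,y) u v -> (P u v <-> c u <> c v)) \/
              (forall u v, side (x,y) u v -> ~ P u v).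

Lemma square_compatible_potential (P : vtx -> vtx -> Prop) (c : vtx -> bool) :
  (forall u v, P u v -> P v u) -> square_compatible P c -> exists s, potential_of P s.
Proof.
  intros Psym Hloc.
  set (h := fun x y => b_of (P (x,y) (x+1,y))).
  set (v := fun x y => b_of (P (x,y) (x,y+1))).
  assert (Hsq : forall x y, xorb (xorb (h x y) (h x (y+1))) (xorb (v x y) (v (x+1) y)) = false).
  { intros x y. unfold h, v. destruct (Hloc x y) as [HA|HB].
    - assert (E : forall a b, side (x,y) a b -> b_of (P a b) = xorb (c a) (c b)).
      { intros a b Hs. specialize (HA a b Hs).
        destruct (b_of (P a b)) eqn:E1; [apply b_of_spec, HA in E1 |];
        destruct (c a), (c b); try tauto; try reflexivity.
        all: exfalso; apply Bool.diff_false_true; rewrite <- E1; apply b_of_spec, HA; discriminate. }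
      rewrite !E by (unfold side; cbn [fst snd]; tauto).
      destruct (c (x,y)), (c (x+1,y)), (c (x,y+1)), (c (x+1,y+1)); reflexivity.
    - assert (E : forall a b, side (x,y) a b -> b_of (P a b) = false).
      { intros a b Hs. apply Bool.not_true_iff_false. rewrite b_of_spec. apply HB; auto. }
      rewrite !E by (unfold side; cbn [fst snd]; tauto). reflexivity. }
  destruct (square_parity_potential h v Hsq) as [s [Hh Hv]].
  exists (fun p => s (fst p) (snd p)).
  assert (Jump : forall a j, a <> xorb a j <-> j = true) by (intros [|] [|]; cbn; intuition congruence).
  assert (Right : forall x y, s x y <> s (x+1) y <-> P (x,y) (x+1,y)).
  { intros x y. rewrite Hh, Jump. apply b_of_spec. }
  assert (Up : forall x y, s x y <> s x (y+1) <-> P (x,y) (x,y+1)).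
  { intros x y. rewrite Hv, Jump. apply b_of_spec. }
  assert (Sym : forall (a b : bool) (X Y : Prop), (a <> b <-> X) -> (Y <-> X) -> (b <> a <-> Y)) by intuition.
  intros [x y] [x' y'] Ha. cbn [fst snd].
  destruct (G_adj_cases _ _ _ _ Ha) as [[-> ->]|[[-> ->]|[[-> ->]|[-> ->]]]]; auto.
  - pose proof (Right (x-1) y) as R. replace (x-1+1) with x in R by lia.
    apply (Sym _ _ _ _ R). split; apply Psym.
  - pose proof (Up x (y-1)) as U. replace (y-1+1) with y in U by lia.
    apply (Sym _ _ _ _ U). split; apply Psym.
Qed.

Lemma contour_potential w K : in_Omega w -> is_contour w K -> exists s, potential_of (crossed_by K) s.
Proof.
  intros Hom Kc. apply (square_compatible_potential _ w); [apply crossed_by_sym|].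
  intros x y. apply square_dichotomy; auto.
Qed.

(** * Paths in regions of the grid *)

Definition path_in (P : vtx -> Prop) : relation vtx :=
  clos_refl_trans vtx (fun a b => G_adj a b /\ P a /\ P b).

Lemma path_in_sym P u v : path_in P u v -> path_in P v u.
Proof.
  induction 1 as [u v [H1 [H2 H3]]| |]; [|apply rt_refl|eapply rt_trans; eauto].
  apply rt_step. split; auto. apply G_adj_sym; auto.
Qed.

Lemma path_in_mono (P P' : vtx -> Prop) u v :
  (forall x, P x -> P' x) -> path_in P u v -> path_in P' u v.
Proof.
  intros HP. induction 1 as [u v [H1 [H2 H3]]| |]; [|apply rt_refl|eapply rt_trans; eauto].
  apply rt_step. auto.
Qed.

Lemma path_in_last P u v : path_in P u v -> P u -> P v.
Proof. induction 1; intuition. Qed.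

Lemma path_in_reached P x0 u : path_in P x0 u -> path_in (path_in P x0) x0 u.
Proof.
  intros H. apply clos_rt_rtn1_iff in H. induction H as [|y z Hyz Hp IH]; [apply rt_refl|].
  eapply rt_trans; [exact IH|]. apply rt_step. destruct Hyz as [A [B C]].
  split; auto. split; [apply clos_rt_rtn1_iff; auto|].
  eapply rt_trans; [apply clos_rt_rtn1_iff; exact Hp| apply rt_step; auto].
Qed.

Lemma potential_const_on (P : vtx -> vtx -> Prop) (s : vtx -> bool) (S : vtx -> Prop) u v :
  potential_of P s -> (forall x y, S x -> S y -> ~ P x y) -> path_in S u v -> s u = s v.
Proof.
  intros Hs HP. induction 1 as [x y [H1 [H2 H3]]| |]; [|auto|congruence].
  apply NNPP. intros Hne. apply (HP x y H2 H3). apply Hs; auto.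
Qed.

Lemma path_in_row_nat P (n : nat) x y : (forall t, x <= t <= x + Z.of_nat n -> P (t,y)) ->
  path_in P (x,y) (x + Z.of_nat n, y).
Proof.
  induction n as [|n IH]; intros H.
  - replace (x + Z.of_nat 0) with x by lia. apply rt_refl.
  - eapply rt_trans; [apply IH; intros t Ht; apply H; lia|].
    apply rt_step. split; [unfold G_adj; cbn; lia|]. split; apply H; lia.
Qed.

Lemma path_in_row P x1 x2 y : (forall t, Z.min x1 x2 <= t <= Z.max x1 x2 -> P (t,y)) ->
  path_in P (x1,y) (x2,y).
Proof.
  intros H. destruct (Z.le_ge_cases x1 x2) as [Hle|Hge].
  - pose proof (path_in_row_nat P (Z.to_nat (x2 - x1)) x1 y) as L.
    rewrite Z2Nat.id in L by lia. replace (x1 + (x2 - x1)) with x2 in L by lia.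
    apply L. intros t Ht; apply H; lia.
  - apply path_in_sym.
    pose proof (path_in_row_nat P (Z.to_nat (x1 - x2)) x2 y) as L.
    rewrite Z2Nat.id in L by lia. replace (x2 + (x1 - x2)) with x1 in L by lia.
    apply L. intros t Ht; apply H; lia.
Qed.

Definition transpose (p : vtx) : vtx := (snd p, fst p).

Lemma path_in_transpose P u v :
  path_in (fun p => P (transpose p)) u v -> path_in P (transpose u) (transpose v).
Proof.
  induction 1 as [u v [H1 [H2 H3]]| |]; [|apply rt_refl|eapply rt_trans; eauto].
  apply rt_step. repeat split; auto. unfold G_adj, transpose in *; cbn; lia.
Qed.

Lemma path_in_column P x y1 y2 : (forall t, Z.min y1 y2 <= t <= Z.max y1 y2 -> P (x,t)) ->
  path_in P (x,y1) (x,y2).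
Proof.
  intros H. apply (path_in_transpose P (y1,x) (y2,x)), path_in_row. intros t Ht. apply H; auto.
Qed.

Lemma path_in_full u v : path_in (fun _ => True) u v.
Proof.
  destruct u as [x y], v as [x' y'].
  apply rt_trans with (x', y); [apply path_in_row | apply path_in_column]; auto.
Qed.

Definition outside (N : Z) (v : vtx) : Prop := N < Z.abs (fst v) \/ N < Z.abs (snd v).

Lemma outside_to_corner N v : 0 <= N -> outside N v -> path_in (outside N) v (N+1, N+1).
Proof.
  intros HN. destruct v as [x y]. unfold outside; cbn [fst snd]. intros [Hx|Hy].
  - apply rt_trans with (x, N+1).
    + apply path_in_column. intros t _. left; cbn; lia.
    + apply path_in_row. intros t _. right; cbn; lia.
  - apply rt_trans with (N+1, y).
    + apply path_in_row. intros t _. right; cbn; lia.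
    + apply path_in_column. intros t _. left; cbn; lia.
Qed.

Lemma outside_connected N u v : 0 <= N -> outside N u -> outside N v -> path_in (outside N) u v.
Proof.
  intros HN Hu Hv. eapply rt_trans; [apply outside_to_corner; eauto|].
  apply path_in_sym, outside_to_corner; auto.
Qed.

Lemma finite_bounded (C : vtx -> Prop) : finite_set C ->
  exists N, 0 <= N /\ forall v, C v -> Z.abs (fst v) <= N /\ Z.abs (snd v) <= N.
Proof.
  intros [l Hl].
  enough (exists N, 0 <= N /\ forall v, In v l -> Z.abs (fst v) <= N /\ Z.abs (snd v) <= N)
    as [N [HN H]] by eauto.
  clear Hl. induction l as [|a l [N [HN H]]]; [exists 0; split; [lia | intros v []]|].
  exists (N + Z.abs (fst a) + Z.abs (snd a)). split; [lia|].
  intros v [<-|Hv]; [lia|]. specialize (H v Hv). lia.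
Qed.

Definition Z_interval (N : Z) : list Z := map (fun k => Z.of_nat k - N) (seq 0 (Z.to_nat (2*N+1))).

Lemma in_Z_interval N z : Z.abs z <= N -> In z (Z_interval N).
Proof.
  intros Hz. unfold Z_interval. apply in_map_iff. exists (Z.to_nat (z + N)).
  split; [rewrite Z2Nat.id by lia; lia|]. apply in_seq. lia.
Qed.

Lemma infinite_outside (X : vtx -> Prop) N : infinite_set X -> exists x, X x /\ outside N x.
Proof.
  intros Hinf. apply NNPP. intros Hn. apply Hinf.
  exists (list_prod (Z_interval N) (Z_interval N)). intros [x y] Hx.
  assert (~ outside N (x,y)) by (intros Ho; apply Hn; eauto).
  unfold outside in *; cbn in *. apply in_prod; apply in_Z_interval; lia.
Qed.

(* Both sets reach beyond a box containing [C], and the outside of a box is connected. *)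
Lemma infinite_sets_joined_avoiding (C X Y : vtx -> Prop) : finite_set C ->
  infinite_set X -> infinite_set Y ->
  (forall x x', X x -> X x' -> path_in X x x') -> (forall y y', Y y -> Y y' -> path_in Y y y') ->
  (forall v, C v -> ~ X v) -> (forall v, C v -> ~ Y v) ->
  forall x y, X x -> Y y -> path_in (fun v => ~ C v) x y.
Proof.
  intros Fin IX IY CX CY DX DY x y Hx Hy.
  destruct (finite_bounded C Fin) as [N [HN HB]].
  destruct (infinite_outside X N IX) as [ox [Xo Oo]].
  destruct (infinite_outside Y N IY) as [oy [Yo Oy]].
  assert (OutC : forall v, outside N v -> ~ C v).
  { intros v Ov Cv. destruct (HB v Cv). destruct Ov; lia. }
  apply rt_trans with ox; [| apply rt_trans with oy].
  - apply (path_in_mono X); auto. intros v Xv Cv; eapply DX; eauto.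
  - apply (path_in_mono (outside N)); auto. apply outside_connected; auto.
  - apply (path_in_mono Y); auto. intros v Yv Cv; eapply DY; eauto.
Qed.

(** * Clusters *)

Section Clusters.
Variable w : config.

Lemma same_cluster_sym u v : same_cluster w u v -> same_cluster w v u.
Proof.
  induction 1 as [u v [H1 H2]| |]; [|apply rt_refl|eapply rt_trans; eauto].
  apply rt_step. split; auto. apply G_adj_sym; auto.
Qed.

Lemma same_cluster_color u v : same_cluster w u v -> w u = w v.
Proof. induction 1 as [u v [_ H]| |]; congruence. Qed.

Lemma same_cluster_path v a b : same_cluster w v a -> same_cluster w a b ->
  path_in (same_cluster w v) a b.
Proof.
  intros Hva H. revert Hva. induction H as [a b H| a | a b c H1 IH1 H2 IH2]; intros Hva.
  - apply rt_step. split; [apply H|]. split; auto. eapply rt_trans; [exact Hva| apply rt_step; auto].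
  - apply rt_refl.
  - eapply rt_trans; [apply IH1; auto| apply IH2]. eapply rt_trans; eauto.
Qed.

Lemma cluster_of_mem b C x : is_b_cluster w b C -> C x -> forall y, C y <-> same_cluster w x y.
Proof.
  intros [v [Hv HC]] Hx y. rewrite HC. apply HC in Hx. split; intros H.
  - eapply rt_trans; [apply same_cluster_sym; eauto | auto].
  - eapply rt_trans; eauto.
Qed.

Lemma cluster_connected b C x y : is_b_cluster w b C -> C x -> C y -> path_in C x y.
Proof.
  intros HC Hx Hy. pose proof (cluster_of_mem b C x HC Hx) as E.
  apply (path_in_mono (same_cluster w x)); [intros t; apply E|].
  apply same_cluster_path; [apply rt_refl | apply E; auto].
Qed.

Lemma cluster_color b C x : is_b_cluster w b C -> C x -> w x = b.
Proof. intros [v [Hv HC]] Hx. apply HC, same_cluster_color in Hx. congruence. Qed.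

Lemma cluster_of x : is_b_cluster w (w x) (same_cluster w x).
Proof. exists x. split; auto. tauto. Qed.

Lemma cluster_not_crossed K b C x y : in_Omega w -> is_contour w K -> is_b_cluster w b C ->
  C x -> C y -> ~ crossed_by K x y.
Proof.
  intros Hom Kc HC Cx Cy Hc. apply (crossed_by_diff w K x y Hom Kc Hc).
  rewrite (cluster_color b C x HC Cx), (cluster_color b C y HC Cy). reflexivity.
Qed.

Variable x0 : vtx.

(* [reach k v]: [v] is joined to [x0] by a grid path that changes state at most [k] times. *)
Inductive reach : nat -> vtx -> Prop :=
 | reach_base : reach 0 x0
 | reach_mono k u v : reach k u -> mono_step w u v -> reach k v
 | reach_lift k u : reach k u -> reach (S k) u
 | reach_jump k u v : reach k u -> G_adj u v -> reach (S k) v.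

Lemma reach_le k m u : (k <= m)%nat -> reach k u -> reach m u.
Proof. induction 1; auto using reach_lift. Qed.

Lemma reach_same_cluster k u v : reach k u -> same_cluster w u v -> reach k v.
Proof. intros Hu H. revert Hu. induction H; eauto using reach_mono. Qed.

Lemma reach0_iff v : reach 0 v <-> same_cluster w x0 v.
Proof.
  split; [|intros H; eapply reach_same_cluster; [apply reach_base | auto]].
  intros H. remember 0%nat as k. induction H; try discriminate; [apply rt_refl|].
  eapply rt_trans; [apply IHreach; auto| apply rt_step; auto].
Qed.

Lemma reach_path k v : reach k v -> path_in (reach k) x0 v.
Proof.
  induction 1 as [|k u v Hu IH Huv|k u Hu IH|k u v Hu IH Huv].
  - apply rt_refl.
  - eapply rt_trans; [eauto|]. apply rt_step.
    split; [apply Huv|]. split; eauto using reach_mono.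
  - eapply path_in_mono; [|eauto]. intros; apply reach_lift; auto.
  - eapply rt_trans; [eapply path_in_mono; [|eauto]; intros; apply reach_lift; auto|].
    apply rt_step. split; auto. split; eauto using reach_lift, reach_jump.
Qed.

Lemma reach_succ_inv k v : reach (S k) v ->
  reach k v \/ exists a b, reach k a /\ G_adj a b /\ same_cluster w b v.
Proof.
  intros H. remember (S k) as m. revert k Heqm.
  induction H as [|m u v Hu IH Huv|m u Hu IH|m u v Hu IH Huv]; intros k' E; try discriminate.
  - destruct (IH k' E) as [H1|[a [b [H1 [H2 H3]]]]]; [left; eauto using reach_mono|].
    right. exists a, b. repeat split; auto. eapply rt_trans; [eauto| apply rt_step; auto].
  - injection E as ->. left; auto.
  - injection E as ->. right. exists u, v. repeat split; auto. apply rt_refl.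
Qed.

Lemma reach_exists v : exists k, reach k v.
Proof.
  pose proof (path_in_full x0 v) as H. apply clos_rt_rtn1_iff in H.
  induction H as [|y z Hyz Hp [k Hk]]; [exists 0%nat; apply reach_base|].
  exists (S k). eapply reach_jump; eauto. apply Hyz.
Qed.

End Clusters.

(* The potential of [P := crossing by K, restricted to the boundary of S] is constant on [S] and
   on its complement, so it separates them and every boundary pair must be crossed by [K]. *)
Lemma boundary_crossed_by_contour w K (S : vtx -> Prop) : in_Omega w -> is_contour w K ->
  (forall u v, S u -> S v -> path_in S u v) ->
  (forall u v, ~ S u -> ~ S v -> path_in (fun x => ~ S x) u v) ->
  (forall u v, G_adj u v -> S u -> ~ S v -> w u <> w v) ->
  forall a b c d, G_adj a b -> S a -> ~ S b -> G_adj c d -> S c -> ~ S d ->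
  crossed_by K a b -> crossed_by K c d.
Proof.
  intros Hom Kc HS HSc Hbd a b c d Hab Sa Sb Hcd Sc Sd Kab.
  set (P := fun u v => crossed_by K u v /\ (S u <-> ~ S v)).
  assert (Psym : forall u v, P u v -> P v u).
  { intros u v [H1 H2]. split; [apply crossed_by_sym; auto|].
    split; intros H; [intros H'; apply H2 in H'; auto|].
    apply NNPP; intros H'; apply H; apply H2; auto. }
  assert (Hloc : square_compatible P (fun x => b_of (S x))).
  { intros x y. destruct (square_dichotomy w K x y Hom Kc) as [HA|HB]; [left|right].
    - intros u v Hs. rewrite b_of_neq. unfold P. split; [tauto|].
      intros Hd. split; auto. apply (HA u v Hs).
      destruct (classic (S u)) as [Su|Su].
      + apply Hbd; auto. eapply side_adj; eauto. apply Hd; auto.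
      + intros E. apply (Hbd v u); auto.
        * apply G_adj_sym; eapply side_adj; eauto.
        * apply NNPP; intros Sv; apply Su; apply Hd; auto.
    - intros u v Hs [H _]. apply (HB u v Hs); auto. }
  destruct (square_compatible_potential P _ Psym Hloc) as [s Hs].
  assert (E1 : s a = s c).
  { eapply potential_const_on; eauto. intros x y Sx Sy [_ H]. apply H in Sx; auto. }
  assert (E2 : s b = s d).
  { eapply (potential_const_on _ _ (fun x => ~ S x)); eauto. intros x y Sx Sy [_ H].
    apply Sy. apply NNPP; intros Sy'. apply Sx. apply H. auto. }
  assert (Pab : P a b) by (split; [auto| tauto]).
  apply Hs in Pab; auto.
  assert (Pcd : P c d) by (apply Hs; auto; congruence).
  apply Pcd.
Qed.

(** * Vertices near a contour *)

Section NearContour.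
Variables (w : config) (K : edge -> Prop).
Hypothesis Hom : in_Omega w.
Hypothesis Kc : is_contour w K.

Definition near (u : vtx) : Prop := exists e, K e /\ corner (face_of e) u.

Definition linked_step (x y : vtx) : Prop := G_adj x y /\ (w x = w y \/ crossed_by K x y).
Definition linked := clos_refl_trans vtx linked_step.

Lemma linked_sym x y : linked x y -> linked y x.
Proof.
  induction 1 as [x y [H1 H2]| |]; [|apply rt_refl|eapply rt_trans; eauto].
  apply rt_step. split; [apply G_adj_sym; auto|].
  destruct H2; [left; auto | right; apply crossed_by_sym; auto].
Qed.

Lemma linked_step_of_crossing Q u v :
  (forall e, crosses e u v -> present w e -> K e) -> side Q u v -> linked_step u v.
Proof.
  intros HK Hs. split; [eapply side_adj; eauto|].
  destruct (bool_dec (w u) (w v)) as [E|E]; [left; auto| right].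
  destruct (crossing_edge_present w u v Hom (side_adj _ _ _ Hs) E) as [e' [P' C']].
  exists e'. auto.
Qed.

Lemma black_side_linked e u v : K e -> side (face_of e) u v -> linked_step u v.
Proof.
  intros Ke Hs. apply (linked_step_of_crossing (face_of e)); auto. intros e' C' P'.
  pose proof (face_of_black e) as Hb. destruct (face_of e) as [m n] eqn:F. cbn [fst snd] in Hb.
  pose proof (black_side_crossing m n e' u v Hb C' Hs) as F'.
  assert (Pe : present w e) by (eapply contour_present; eauto).
  destruct (edge_dir e) eqn:D; destruct (edge_dir e') eqn:D';
    try (rewrite (face_of_inj e' e); auto; congruence); exfalso.
  - apply (face_edges_not_both_present w e e' Hom); congruence.
  - apply (face_edges_not_both_present w e' e Hom); congruence.
Qed.

Lemma white_side_linked e c u v : K e -> endpoint c e -> side (vertex_face c) u v -> linked_step u v.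
Proof.
  intros Ke Ec Hs. apply (linked_step_of_crossing (vertex_face c)); auto. intros e' C' P'.
  pose proof (vertex_face_white c) as Hw. destruct (vertex_face c) as [x y] eqn:Wc.
  destruct (white_side_crossing x y e' u v Hw C' Hs) as [c' [E' W']].
  assert (c' = c) as -> by (apply vertex_face_inj; congruence).
  eapply contour_extend; eauto. eapply share_end_of_endpoint; eauto.
Qed.

Lemma square_linked Q u v : (forall a b, side Q a b -> linked_step a b) ->
  corner Q u -> corner Q v -> linked u v.
Proof.
  destruct Q as [x y]. intros Hs.
  assert (Hc : forall z, corner (x,y) z -> linked (x,y) z).
  { intros z Hz. unfold corner in Hz; cbn [fst snd] in Hz.
    destruct Hz as [ -> | [ -> | [ -> | -> ]]].
    - apply rt_refl.
    - apply rt_step, Hs. unfold side; cbn. tauto.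
    - apply rt_step, Hs. unfold side; cbn. tauto.
    - eapply rt_trans; apply rt_step, Hs; unfold side; cbn; [left|]; eauto; tauto. }
  intros Hu Hv. eapply rt_trans; [apply linked_sym, Hc; auto| apply Hc; auto].
Qed.

(* Consecutive edges of [K] have black faces touching the white face around their common
   endpoint, so the corners of all these faces are linked. *)
Lemma near_linked u v : near u -> near v -> linked u v.
Proof.
  destruct Kc as [e0 [P0 HK]].
  assert (Main : forall f, clos_refl_trans edge (contour_step w) e0 f -> present w f ->
                   forall z, corner (face_of f) z -> linked (face_of e0) z).
  { intros f Hf. apply clos_rt_rtn1_iff in Hf. induction Hf as [|g h Hgh Hp IH].
    - intros _ z Hz. apply (square_linked (face_of e0)); [|left; reflexivity| auto].
      intros a b Hs. eapply black_side_linked; eauto. apply HK; split; auto. apply rt_refl.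
    - intros Ph z Hz. destruct Hgh as [Pg [_ Hs]].
      assert (Kg : K g) by (apply HK; split; auto; apply clos_rt_rtn1_iff; auto).
      assert (Kh : K h) by (eapply contour_extend; eauto).
      destruct (share_end_common g h Hs) as [c [Eg Eh]].
      destruct (endpoint_common_corner c g Eg) as [u1 [U1a U1b]].
      destruct (endpoint_common_corner c h Eh) as [u2 [U2a U2b]].
      eapply rt_trans; [apply (IH Pg u1 U1a)|].
      eapply rt_trans; [apply (square_linked (vertex_face c) u1 u2); auto;
                        intros a b Hs'; eapply white_side_linked; eauto|].
      apply (square_linked (face_of h)); auto. intros a b Hs'; eapply black_side_linked; eauto. }
  intros [e [Ke Ce]] [f [Kf Cf]]. apply HK in Ke, Kf.
  eapply rt_trans; [apply linked_sym; apply (Main e); tauto| apply (Main f); tauto].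
Qed.

(* Along a linked step either the state or the potential changes, never both. *)
Lemma linked_xor_invariant s u v : potential_of (crossed_by K) s ->
  linked u v -> xorb (w u) (s u) = xorb (w v) (s v).
Proof.
  intros Hs. induction 1 as [x y [Ha Hk]| |]; [|auto|congruence].
  assert (E : crossed_by K x y <-> w x <> w y).
  { split; [apply crossed_by_diff; auto|]. intros D. destruct Hk as [Hk|Hk]; [congruence|auto]. }
  specialize (Hs x y Ha). rewrite E in Hs. revert Hs.
  destruct (w x), (w y), (s x), (s y); cbn; intuition congruence.
Qed.

End NearContour.

(** * Incidence *)

Lemma IZR_unit_interval (z : Z) : (-1 < IZR z < 2)%R -> z = 0 \/ z = 1.
Proof. intros [H1 H2]. apply lt_IZR in H1. apply lt_IZR in H2. lia. Qed.

(* Squared distance from [(i,j)] to the horizontal segment of length [2] whose midpoint is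
   the centre of the face [(m,n)]. *)
Lemma horizontal_segment_half (i j m n : Z) (f : R -> R) :
  (forall t, f t = (IZR i - IZR m + /2 - 2*t)^2 + (IZR j - IZR n - /2)^2)%R ->
  ((exists t, 0 <= t <= 1 /\ f t = /4) /\ (forall t, 0 <= t <= 1 -> /4 <= f t))%R <->
  (i = m \/ i = m+1) /\ (j = n \/ j = n+1).
Proof.
  intros E. split.
  - intros [[t [[H0 H1] Ht]] _]. rewrite E in Ht.
    assert (Hy : (-1 < IZR (j - n) < 2)%R).
    { rewrite minus_IZR. pose proof (pow2_ge_0 (IZR i - IZR m + /2 - 2*t)). nra. }
    destruct (IZR_unit_interval _ Hy) as [Hj|Hj];
    (assert (Hyy : ((IZR j - IZR n - /2)^2 = /4)%R) by
       (replace (IZR j) with (IZR (j - n) + IZR n)%R by (rewrite minus_IZR; ring); rewrite Hj; cbn; field));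
    (assert (Hx : (IZR i - IZR m + /2 - 2*t = 0)%R) by nra);
    (assert (Hi : (-1 < IZR (i - m) < 2)%R) by (rewrite minus_IZR; lra));
    destruct (IZR_unit_interval _ Hi); split; lia.
  - intros [Hi Hj].
    assert (Hyy : ((IZR j - IZR n - /2)^2 = /4)%R).
    { destruct Hj as [->| ->]; [|rewrite plus_IZR]; field. }
    split.
    + destruct Hi as [->| ->].
      * exists (/4)%R. split; [lra|]. rewrite E, Hyy. field.
      * exists (3/4)%R. split; [lra|]. rewrite E, Hyy, plus_IZR. field.
    + intros t _. rewrite E, Hyy. pose proof (pow2_ge_0 (IZR i - IZR m + /2 - 2*t)). lra.
Qed.

Lemma vertical_segment_half (i j m n : Z) (f : R -> R) :
  (forall t, f t = (IZR i - IZR m - /2)^2 + (IZR j - IZR n + /2 - 2*t)^2)%R ->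
  ((exists t, 0 <= t <= 1 /\ f t = /4) /\ (forall t, 0 <= t <= 1 -> /4 <= f t))%R <->
  (i = m \/ i = m+1) /\ (j = n \/ j = n+1).
Proof.
  intros E. rewrite (horizontal_segment_half j i n m f); [tauto|]. intros t. rewrite E. ring.
Qed.

Lemma dist_seg_half_corner e v :
  dist_seg_half (vtx_pos v) (lvtx_pos (fst (edge_ends e))) (lvtx_pos (snd (edge_ends e))) <->
  corner (face_of e) v.
Proof.
  destruct v as [i j]. unfold dist_seg_half, corner.
  assert (C : forall m n, (i = m \/ i = m+1) /\ (j = n \/ j = n+1) <->
     (i,j) = (m,n) \/ (i,j) = (m,n+1) \/ (i,j) = (m+1,n) \/ (i,j) = (m+1,n+1)).
  { intros m n. split.
    - intros [[->| ->] [->| ->]]; tauto.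
    - intros H; repeat destruct H as [H|H]; destruct_pairs; lia. }
  destruct e as [[|] a b [|]]; cbn [edge_ends face_of fst snd lvtx_pos vtx_pos]; rewrite <- C;
  [apply horizontal_segment_half | apply vertical_segment_half
  |apply horizontal_segment_half | apply vertical_segment_half];
  intros t; unfold dist2, seg_point, vtx_pos; cbn [fst snd];
  repeat rewrite ?plus_IZR, ?minus_IZR, ?mult_IZR; field.
Qed.

Lemma incident_iff C K : incident C K <-> exists v, C v /\ near K v.
Proof.
  unfold incident, near. split.
  - intros [v [e [Cv [Ke D]]]]. exists v. split; auto. exists e. split; auto.
    apply dist_seg_half_corner; auto.
  - intros [v [Cv [e [Ke D]]]]. exists v, e. split; [|split]; auto.
    apply (proj2 (dist_seg_half_corner e v)); auto.
Qed.

(** * A contour incident to both infinite clusters *)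

Lemma unreached_joins_obstacle (C : vtx -> Prop) (x0 : vtx) : ~ C x0 -> forall v,
  ~ path_in (fun v => ~ C v) x0 v ->
  exists c, C c /\ path_in (fun x => ~ path_in (fun v => ~ C v) x0 x) v c.
Proof.
  intros nC v NUv.
  pose proof (path_in_full v x0) as P. apply clos_rt_rt1n_iff in P.
  induction P as [v|v v1 z Hvv1 P IH]; [exfalso; apply NUv, rt_refl|].
  destruct (classic (C v)) as [Cv|Cv]; [exists v; split; auto; apply rt_refl|].
  assert (NUv1 : ~ path_in (fun v => ~ C v) z v1).
  { intros Uv1. apply NUv. eapply rt_trans; [exact Uv1|]. apply rt_step.
    split; [apply G_adj_sym, Hvv1|]. split; auto. apply (path_in_last _ _ _ Uv1 nC). }
  destruct (IH nC NUv1) as [c [Cc Pc]]. exists c. split; auto.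
  eapply rt_trans; [|exact Pc]. apply rt_step. split; [apply Hvv1| auto].
Qed.

(* The boundary of the region [U] reached from [x0] around the cluster [C] of [c] separates
   two connected sets and consists of state changes, so one contour crosses all of it. *)
Lemma cluster_hull_crossing w K c x0 : in_Omega w -> is_contour w K -> ~ same_cluster w c x0 ->
  forall a b a' b', same_cluster w c a -> path_in (fun v => ~ same_cluster w c v) x0 b ->
  G_adj a b -> same_cluster w c a' -> path_in (fun v => ~ same_cluster w c v) x0 b' ->
  G_adj a' b' -> crossed_by K a b -> crossed_by K a' b'.
Proof.
  intros Hom Kc nCx0. set (C := same_cluster w c). set (U := path_in (fun v => ~ C v) x0).
  assert (UnC : forall v, U v -> ~ C v) by (intros v Uv; apply (path_in_last _ _ _ Uv nCx0)).
  assert (toC : forall v, ~ U v -> path_in (fun x => ~ U x) v c).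
  { intros v NUv. destruct (unreached_joins_obstacle C x0 nCx0 v NUv) as [c' [Cc Pc]].
    eapply rt_trans; [exact Pc|].
    apply (path_in_mono C); [intros x Cx Ux; apply (UnC x Ux Cx)|].
    apply path_in_sym, same_cluster_path; [apply rt_refl | auto]. }
  intros a b a' b' Ca Ub Hab Ca' Ub' Hab'.
  apply (boundary_crossed_by_contour w K (fun x => ~ U x) Hom Kc); auto.
  - intros u v Hu Hv. eapply rt_trans; [apply toC; auto| apply path_in_sym, toC; auto].
  - intros u v Hu Hv. apply NNPP in Hu, Hv.
    apply (path_in_mono U); [intros x Ux NUx; auto|].
    eapply rt_trans; [apply path_in_sym|]; apply path_in_reached; auto.
  - intros u v Huv Nu NNv E. apply NNPP in NNv.
    assert (Cu : C u).
    { apply NNPP. intros Cu. apply Nu. eapply rt_trans; [exact NNv|].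
      apply rt_step. split; [apply G_adj_sym; auto | split; [apply UnC|]; auto]. }
    apply (UnC v NNv). eapply rt_trans; [exact Cu| apply rt_step; split; auto].
  - intros Ua. apply (UnC a Ua Ca).
  - intros Ua'. apply (UnC a' Ua' Ca').
Qed.

Section Existence.
Variables (w : config) (xi0 xi1 : vtx -> Prop) (x0 : vtx).
Hypothesis Hom : in_Omega w.
Hypothesis C0 : is_b_cluster w false xi0.
Hypothesis I0 : infinite_set xi0.
Hypothesis U0 : forall C, is_b_cluster w false C -> infinite_set C -> same_set C xi0.
Hypothesis C1 : is_b_cluster w true xi1.
Hypothesis I1 : infinite_set xi1.
Hypothesis U1 : forall C, is_b_cluster w true C -> infinite_set C -> same_set C xi1.
Hypothesis Hx0 : forall x, xi0 x <-> same_cluster w x0 x.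

Lemma xi0_iff_reach0 v : xi0 v <-> reach w x0 0 v.
Proof. rewrite Hx0, reach0_iff. tauto. Qed.

Lemma other_cluster_finite a : (forall v, same_cluster w a v -> ~ xi0 v) ->
  (forall v, same_cluster w a v -> ~ xi1 v) -> finite_set (same_cluster w a).
Proof.
  intros D0 D1. apply NNPP. intros Inf. pose proof (cluster_of w a) as HC.
  destruct (w a); [apply (D1 a) | apply (D0 a)]; try apply rt_refl;
  [apply (U1 _ HC Inf) | apply (U0 _ HC Inf)]; apply rt_refl.
Qed.

Definition crossing_at_level (K : edge -> Prop) (k : nat) : Prop :=
  exists a b y, reach w x0 k a /\ ~ reach w x0 k b /\ G_adj a b /\ crossed_by K a b /\
    xi1 y /\ path_in (fun v => ~ reach w x0 k v) b y.

(* The cluster of [a] lies strictly at level [k+1], so it is finite and [K], which crosses its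
   outer boundary once, crosses it everywhere, in particular towards level [k]. *)
Lemma crossing_at_level_descend K k : is_contour w K ->
  (forall y, xi1 y -> ~ reach w x0 (S k) y) ->
  crossing_at_level K (S k) -> crossing_at_level K k.
Proof.
  intros Kc Hmin [a [b [y [Ra [NRb [Hab [Kab [Y Pb]]]]]]]].
  assert (NRa : ~ reach w x0 k a) by (intros R; apply NRb; eapply reach_jump; eauto).
  destruct (reach_succ_inv w x0 k a Ra) as [R|[a' [b' [Ra' [Hab' Sba]]]]]; [contradiction|].
  set (C := same_cluster w a).
  assert (CR : forall v, C v -> reach w x0 (S k) v) by (intros v Cv; eapply reach_same_cluster; eauto).
  assert (CnR : forall v, C v -> ~ reach w x0 k v).
  { intros v Cv Rv. apply NRa. eapply reach_same_cluster; [exact Rv| apply same_cluster_sym; auto]. }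
  assert (D0 : forall v, C v -> ~ xi0 v).
  { intros v Cv Xv. apply (CnR v Cv). apply (reach_le w x0 0); [lia|]. apply xi0_iff_reach0; auto. }
  assert (D1 : forall v, C v -> ~ xi1 v) by (intros v Cv Xv; apply (Hmin v Xv), CR, Cv).
  assert (Cb' : C b') by (apply same_cluster_sym; auto).
  assert (Hcross : crossed_by K b' a').
  { apply (cluster_hull_crossing w K a x0 Hom Kc) with a b; auto.
    - intros Cx0. apply (D0 x0 Cx0), Hx0, rt_refl.
    - apply rt_refl.
    - eapply rt_trans.
      + apply (infinite_sets_joined_avoiding C xi0 xi1); eauto using other_cluster_finite.
        * intros; eapply cluster_connected; eauto.
        * intros; eapply cluster_connected; eauto.
        * apply Hx0, rt_refl.
      + apply path_in_sym. eapply path_in_mono; [|exact Pb]. intros v NR Cv. apply NR, CR, Cv.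
    - eapply path_in_mono; [|apply reach_path; exact Ra']. intros v Rv Cv. apply (CnR v Cv Rv).
    - apply G_adj_sym; auto. }
  exists a', b', y. repeat split; auto; [apply crossed_by_sym; auto|].
  apply rt_trans with a; [|apply rt_trans with b].
  - apply (path_in_mono C); [intros x Cx; apply CnR; auto|].
    apply path_in_sym, same_cluster_path; [apply rt_refl | auto].
  - apply rt_step. split; auto. split; [apply NRa|]. intros Rb. apply NRb. apply reach_lift; auto.
  - eapply path_in_mono; [|exact Pb]. intros v NR Rv. apply NR. apply reach_lift; auto.
Qed.

Lemma contour_near_both_clusters :
  exists K, is_contour w K /\ (exists v, xi0 v /\ near K v) /\ (exists v, xi1 v /\ near K v).
Proof.
  set (Lev := fun n => exists y, xi1 y /\ reach w x0 n y).
  assert (Ex : exists n, Lev n).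
  { destruct C1 as [y0 [_ Hy0]]. destruct (reach_exists w x0 y0) as [k Hk].
    exists k, y0. split; auto. apply Hy0, rt_refl. }
  destruct (dec_inh_nat_subset_has_unique_least_element Lev (fun n => classic (Lev n)) Ex)
    as [n [[[y [Y1 Ry]] Hmin] _]].
  destruct n as [|k0].
  { apply xi0_iff_reach0 in Ry. exfalso.
    pose proof (cluster_color w false xi0 y C0 Ry). pose proof (cluster_color w true xi1 y C1 Y1).
    congruence. }
  assert (Below : forall j y', (j <= k0)%nat -> xi1 y' -> ~ reach w x0 j y').
  { intros j y' Hj Y' R. specialize (Hmin j (ex_intro _ y' (conj Y' R))). lia. }
  destruct (reach_succ_inv w x0 k0 y Ry) as [R|[a [b [Ra [Hab Sby]]]]]; [exfalso; eapply Below; eauto|].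
  assert (NRb : ~ reach w x0 k0 b) by (intros R; eapply Below; eauto; eapply reach_same_cluster; eauto).
  assert (Dab : w a <> w b) by (intros E; apply NRb; eapply reach_mono; eauto; split; auto).
  destruct (crossing_edge_present w a b Hom Hab Dab) as [e [Pe Ce]].
  set (K := fun f => present w f /\ clos_refl_trans edge (contour_step w) e f).
  assert (Kc : is_contour w K) by (exists e; split; auto; intros f; apply iff_refl).
  assert (Ke : K e) by (split; auto; apply rt_refl).
  assert (Y1b : xi1 b) by (apply (cluster_of_mem w true xi1 y C1 Y1), same_cluster_sym; auto).
  assert (Top : crossing_at_level K k0).
  { exists a, b, y. repeat split; auto; [exists e; auto|].
    apply (path_in_mono (same_cluster w b)).
    - intros v Sv Rv. apply NRb. eapply reach_same_cluster; [exact Rv| apply same_cluster_sym; auto].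
    - apply same_cluster_path; auto. apply rt_refl. }
  assert (Bottom : forall j, (j <= k0)%nat -> crossing_at_level K j -> crossing_at_level K 0).
  { induction j as [|j IH]; intros Hj Qj; auto.
    apply IH; [lia|]. apply crossing_at_level_descend; auto. }
  destruct (Bottom k0 (le_n _) Top) as [a0 [b0 [y0 [Ra0 [_ [_ [[f [Kf Cf]] _]]]]]]].
  exists K. split; [exact Kc|]. split.
  - exists a0. split; [apply xi0_iff_reach0; auto|]. exists f. split; auto. apply (crosses_corner f a0 b0 Cf).
  - exists b. split; auto. exists e. split; auto. apply (crosses_corner e a b Ce).
Qed.

End Existence.

(** * Uniqueness and infiniteness *)

Lemma contours_sharing_edge_equal w K K' e : is_contour w K -> is_contour w K' -> K e -> K' e ->
  same_set K' K.
Proof.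
  assert (Sym : forall f g, clos_refl_trans edge (contour_step w) f g ->
                            clos_refl_trans edge (contour_step w) g f).
  { induction 1 as [f g [P1 [P2 S]]| |]; [|apply rt_refl|eapply rt_trans; eauto].
    apply rt_step. repeat split; auto. apply share_end_sym; auto. }
  intros [e0 [P0 H]] [e0' [P0' H']] Ke Ke' f.
  rewrite H, H'. apply H in Ke. apply H' in Ke'. destruct Ke as [_ A], Ke' as [_ B].
  split; intros [Pf C]; split; auto.
  - eapply rt_trans; [exact A|]. eapply rt_trans; [apply Sym; exact B| exact C].
  - eapply rt_trans; [exact B|]. eapply rt_trans; [apply Sym; exact A| exact C].
Qed.

Lemma cluster_potential_const w K s b C x y : in_Omega w -> is_contour w K ->
  potential_of (crossed_by K) s -> is_b_cluster w b C -> C x -> C y -> s x = s y.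
Proof.
  intros Hom Kc Hs HC Cx Cy. apply (potential_const_on _ s C x y Hs).
  - intros u v; eapply cluster_not_crossed; eauto.
  - eapply cluster_connected; eauto.
Qed.

Lemma near_both_separates w K s X Y : in_Omega w -> is_contour w K ->
  potential_of (crossed_by K) s -> is_b_cluster w false X -> is_b_cluster w true Y ->
  (exists u, X u /\ near K u) -> (exists v, Y v /\ near K v) ->
  forall x y, X x -> Y y -> s x <> s y.
Proof.
  intros Hom Kc Hs HX HY [u [Xu Nu]] [v [Yv Nv]] x y Xx Yy.
  pose proof (linked_xor_invariant w K Hom Kc s u v Hs (near_linked w K Hom Kc u v Nu Nv)) as E.
  rewrite (cluster_color w false X u HX Xu), (cluster_color w true Y v HY Yv) in E.
  rewrite <- (cluster_potential_const w K s false X u x), <- (cluster_potential_const w K s true Y v y);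
    auto.
  destruct (s u), (s v); discriminate.
Qed.

(* A finite contour leaves the potential constant far away, where both sets have points. *)
Lemma separating_contour_infinite K s X Y : potential_of (crossed_by K) s ->
  infinite_set X -> infinite_set Y -> (forall x y, X x -> Y y -> s x <> s y) -> infinite_set K.
Proof.
  intros Hs IX IY Sep [l Hl].
  assert (Faces : finite_set (fun p : vtx => exists e, K e /\ face_of e = p)).
  { exists (map face_of l). intros p [e [Ke <-]]. apply in_map. auto. }
  destruct (finite_bounded _ Faces) as [N [HN HB]].
  assert (NoCross : forall x y, outside (N+1) x -> outside (N+1) y -> ~ crossed_by K x y).
  { intros x y Ox _ [e [Ke Ce]]. destruct (crosses_corner e x y Ce) as [Cx _].
    destruct (HB (face_of e) (ex_intro _ e (conj Ke eq_refl))) as [B1 B2].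
    unfold corner, outside in *. destruct (face_of e) as [m n]. cbn [fst snd] in *.
    destruct Cx as [ -> | [ -> | [ -> | -> ]]]; cbn [fst snd] in Ox; lia. }
  destruct (infinite_outside X (N+1) IX) as [x [Xx Ox]].
  destruct (infinite_outside Y (N+1) IY) as [y [Yy Oy]].
  apply (Sep x y Xx Yy), (potential_const_on _ s (outside (N+1)) x y Hs NoCross).
  apply outside_connected; auto; lia.
Qed.

(* A linked step of [K'] is crossed by [K] only through an edge of [K']. *)
Lemma separated_by_contour_meets w K K' s u v : in_Omega w -> is_contour w K ->
  is_contour w K' -> potential_of (crossed_by K) s -> near K' u -> near K' v -> s u <> s v ->
  exists e, K e /\ K' e.
Proof.
  intros Hom Kc Kc' Hs Nu Nv Suv. apply NNPP. intros Hdis. apply Suv.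
  pose proof (near_linked w K' Hom Kc' u v Nu Nv) as L. clear Nu Nv Suv.
  induction L as [x y [Ha Hk]| |]; [|auto|congruence].
  apply NNPP. intros Hxy. apply Hs in Hxy; auto.
  pose proof (crossed_by_diff w K x y Hom Kc Hxy) as D.
  destruct Hk as [Hk|[e' [K'e' C']]]; [congruence|].
  destruct Hxy as [e [Ke Ce]]. rewrite (crosses_unique e e' x y Ce C') in Ke. eauto.
Qed.

Theorem lemma6p4 (w : config) (xi0 xi1 : vtx -> Prop) :
  in_Omega w ->
  is_b_cluster w false xi0 -> infinite_set xi0 ->
  (forall C, is_b_cluster w false C -> infinite_set C -> same_set C xi0) ->
  is_b_cluster w true xi1 -> infinite_set xi1 ->
  (forall C, is_b_cluster w true C -> infinite_set C -> same_set C xi1) ->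
  exists K, is_contour w K /\ infinite_set K /\ incident xi0 K /\ incident xi1 K /\
    forall K', is_contour w K' -> infinite_set K' -> incident xi0 K' -> incident xi1 K' ->
      same_set K' K.
Proof.
  intros Hom C0 I0 U0 C1 I1 U1.
  pose proof C0 as [x0 [_ Hx0]].
  destruct (contour_near_both_clusters w xi0 xi1 x0 Hom C0 I0 U0 C1 I1 U1 Hx0)
    as [K [Kc [N0 N1]]].
  destruct (contour_potential w K Hom Kc) as [s Hs].
  pose proof (near_both_separates w K s xi0 xi1 Hom Kc Hs C0 C1 N0 N1) as Sep.
  exists K. split; [exact Kc|]. split; [|split; [|split]].
  - exact (separating_contour_infinite K s xi0 xi1 Hs I0 I1 Sep).
  - apply incident_iff; auto.
  - apply incident_iff; auto.
  - intros K' Kc' _ In0 In1.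
    apply incident_iff in In0 as [v0 [X0 M0]], In1 as [v1 [X1 M1]].
    destruct (separated_by_contour_meets w K K' s v0 v1 Hom Kc Kc' Hs M0 M1 (Sep v0 v1 X0 X1))
      as [e [Ke Ke']].
    exact (contours_sharing_edge_equal w K K' e Kc Kc' Ke Ke').
Qed.
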